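(* Let $d \geq 1$ and $n \geq 0$ be integers and let $\mathbf{x} \in \mathbb{Z}^{n+1}_{\mathrm{prim}}$. Then the ball $\mathcal{B}_{N_{d,n}}(\|\mathbf{x}\|)$ contains $N_{d,n} - 1$ linearly independent vectors of the lattice $\Lambda_{\nu_{d,n}(\mathbf{x})}$.
   Context: $\|\cdot\|$ is the Euclidean norm and $\mathcal{B}_N(u) = \{\mathbf{y} \in \mathbb{R}^N : \|\mathbf{y}\| \leq u\}$. $\mathbb{Z}^{N}_{\mathrm{prim}}$ is the set of vectors in $\mathbb{Z}^N$ whose coordinates have gcd $1$. $N_{d,n} = \binom{n+d}{d}$ and $\nu_{d,n} : \mathbb{R}^{n+1} \to \mathbb{R}^{N_{d,n}}$ is the Veronese map listing all monomials of degree $d$ in the $n+1$ coordinates in lexicographic order. For $\mathbf{c} \in \mathbb{Z}^N$, $\Lambda_{\mathbf{c}} = \{\mathbf{y} \in \mathbb{Z}^N : \langle \mathbf{c}, \mathbf{y}\rangle = 0\}$, with $\langle\cdot,\cdot\rangle$ the Euclidean inner product. *)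

From HB Require Import structures.
From mathcomp Require Import all_boot all_order all_algebra.
Unset Strict Implicit. Unset Printing Implicit Defensive.
Import Order.TTheory GRing.Theory Num.Theory.
Local Open Scope ring_scope.

Definition Ndn (d n : nat) : nat := 'C(n + d, d).

(* Exponent vectors of monomials of degree d in the n+1 variables x_0..x_n.
   These index the coordinates of the Veronese embedding. *)
Definition mono (n d : nat) : predArgType :=
  {e : {ffun 'I_n.+1 -> 'I_d.+1} | (\sum_i (e i : nat) == d)%N}.
HB.instance Definition _ n d := Finite.on (mono n d).

Arguments mono : clear implicits.
Definition veronese (d n : nat) (x : 'I_n.+1 -> int) : mono n d -> int :=
  fun e => \prod_(i < n.+1) x i ^+ (val e i : nat).

Definition primitive {k : nat} (x : 'I_k -> int) : Prop :=
  (\big[gcdn/0%N]_(i < k) `|x i|%N)%N = 1%N.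

Definition dotz {I : finType} (c y : I -> int) : int := \sum_(i : I) c i * y i.
Definition sqnorm {I : finType} (y : I -> int) : int := \sum_(i : I) y i ^+ 2.

Definition in_Lambda {I : finType} (c y : I -> int) : Prop := dotz c y = 0.

(* Linear independence (over Q, equivalently over R) of a family of integer vectors. *)
Definition lin_indep {I : finType} {k : nat} (y : 'I_k -> I -> int) : Prop :=
  forall c : 'I_k -> rat,
    (forall m : I, \sum_(j < k) c j * (y j m)%:~R = 0) -> forall j, c j = 0.

From mathcomp Require Import all_boot all_order all_algebra.
From mathcomp Require Import zify ring.
Import Order.TTheory GRing.Theory Num.Theory.
Set Implicit Arguments. Unset Strict Implicit.

(* Fix a coordinate k with x_k <> 0 (it exists since x is primitive).  The
   monomials of degree d are the N_{d,n} exponent vectors e; all of them but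
   the pure power x_k^d have an exponent e_j > 0 with j <> k.  Moving one unit
   of that exponent from j to k gives a monomial e' with
   x^{e'} * x_j = x^e * x_k, so the two-term vector y_e = x_k delta_e - x_j delta_{e'}
   lies in Lambda_{nu(x)} and has squared norm x_k^2 + x_j^2 <= |x|^2.
   These N_{d,n} - 1 vectors are triangular with respect to the k-exponent of e
   (the only other non-zero entry of y_e sits at a monomial of larger k-exponent),
   hence linearly independent. *)

Section Monomials.
Variables n d : nat.
Implicit Types (e : mono n d) (i j k : 'I_n.+1).

Lemma card_mono : #|mono n d| = Ndn d n.
Proof.
rewrite /Ndn -bin_sub ?leq_addl // addnK -card_ord_partitions.
pose tf (t : n.+1.-tuple 'I_d.+1) : {ffun 'I_n.+1 -> 'I_d.+1} := [ffun i => tnth t i].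
rewrite -(card_in_imset (f := tf)); last first.
  move=> t1 t2 _ _ /ffunP eq_t; apply: eq_from_tnth => i.
  by have := eq_t i; rewrite !ffunE.
rewrite card_sig; apply: eq_card => f; rewrite inE.
apply/idP/imsetP => [sum_f | [t]].
- exists [tuple f i | i < n.+1]; last by apply/ffunP => i; rewrite ffunE tnth_mktuple.
  by rewrite inE big_tuple; under eq_bigr do rewrite tnth_mktuple.
- rewrite inE big_tuple => sum_t ->.
  by under eq_bigr do rewrite ffunE.
Qed.

Lemma mono_sum e : (\sum_i (val e i : nat))%N = d.
Proof. exact: eqP (valP e). Qed.

Lemma mono_le_two e i j : i != j -> (val e i + val e j <= d)%N.
Proof.
move=> ij; apply: leq_trans (eq_leq (mono_sum e)).
rewrite (bigD1 i) //= (bigD1 j) /=; last by rewrite eq_sym.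
by rewrite addnA leq_addr.
Qed.

Lemma pure_power_subproof k :
  (\sum_i ([ffun i => if i == k then ord_max else ord0] : {ffun 'I_n.+1 -> 'I_d.+1}) i == d)%N.
Proof.
rewrite (bigD1 k) //= ffunE eqxx big1 ?addn0 // => i ik.
by rewrite ffunE (negbTE ik).
Qed.

Definition pure_power k : mono n d :=
  exist (fun f : {ffun 'I_n.+1 -> 'I_d.+1} => (\sum_i (f i : nat) == d)%N) _
    (pure_power_subproof k).

Lemma other_exponent k e : e != pure_power k ->
  exists2 j, j != k & (0 < val e j)%N.
Proof.
move=> e_nonpure; case: (pickP (fun j => (j != k) && (0 < val e j)%N)) => [j /andP[]|none].
  by exists j.
have zero_off_k j : j != k -> (val e j : nat) = 0%N.
  by move=> jk; have := none j; rewrite /= jk /=; case: (val e j : nat).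
case/negP: e_nonpure; apply/eqP/val_inj/ffunP => i /=.
rewrite ffunE; case: eqVneq => [->|ik]; apply/val_inj => /=; last exact: zero_off_k.
have := mono_sum e; rewrite (bigD1 k) //= big1 ?addn0 // => j /andP[_]; exact: zero_off_k.
Qed.

Lemma card_nonpure k : (Ndn d n).-1 = #|predC1 (pure_power k)|.
Proof. by rewrite cardC1 card_mono. Qed.

Definition nonpure k (j : 'I_(Ndn d n).-1) : mono n d :=
  enum_val (cast_ord (card_nonpure k) j).

Lemma nonpureP k (j : 'I_(Ndn d n).-1) : nonpure k j != pure_power k.
Proof. exact: (enum_valP (cast_ord (card_nonpure k) j)). Qed.

Lemma nonpure_inj k : injective (nonpure k).
Proof. by move=> j1 j2 /enum_val_inj /cast_ord_inj. Qed.

(* A variable other than x_k occurring in e (meaningful when e is not pure). *)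
Definition donor k e : 'I_n.+1 := odflt k [pick j | (j != k) && (0 < val e j)%N].

Lemma donorP k e : e != pure_power k -> donor k e != k /\ (0 < val e (donor k e))%N.
Proof.
move=> /other_exponent [j jk ej]; rewrite /donor.
case: pickP => [i /andP[] //| none].
by have := none j; rewrite jk ej.
Qed.

Definition shift_fun k j e : {ffun 'I_n.+1 -> 'I_d.+1} :=
  [ffun i => inord (val e i + (i == k) - (i == j))].
Definition shift k j e : mono n d := insubd e (shift_fun k j e).

Lemma shift_val k j e : j != k -> (0 < val e j)%N ->
  forall i, (val (shift k j e) i : nat) = (val e i + (i == k) - (i == j))%N.
Proof.
move=> jk ej.
have shift_funE i : (shift_fun k j e i : nat) = (val e i + (i == k) - (i == j))%N.
  rewrite ffunE inordK //; case: (eqVneq i k) => [->|ik].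
    rewrite eq_sym (negbTE jk) subn0 addn1 ltnS.
    have := mono_le_two e jk; lia.
  rewrite addn0; have := ltn_ord (val e i); lia.
suff sum_d : (\sum_i (shift_fun k j e i : nat) == d)%N by rewrite /shift insubdK.
rewrite (bigD1 k) //= (bigD1 j) //= (eq_bigr (fun i => val e i : nat)); last first.
  by move=> i /andP[ik ij]; rewrite shift_funE (negbTE ik) (negbTE ij) addn0 subn0.
have := mono_sum e; rewrite (bigD1 k) //= (bigD1 j) //= !shift_funE !eqxx.
rewrite (negbTE jk) [k == j]eq_sym (negbTE jk) addn1 subn0 addn0 subn1.
by rewrite addSnnS -addSn prednK // => sum_e; apply/eqP; exact: sum_e.
Qed.

(* The shift raises the exponent of x_k by one; this drives the triangularity. *)
Lemma shift_k k j e : j != k -> (0 < val e j)%N ->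
  (val (shift k j e) k : nat) = (val e k).+1.
Proof. by move=> jk ej; rewrite shift_val // eqxx eq_sym (negbTE jk); lia. Qed.

Lemma shift_neq k j e : j != k -> (0 < val e j)%N -> shift k j e != e.
Proof. by move=> jk ej; apply/eqP => shift_e; have := shift_k jk ej; rewrite shift_e; lia. Qed.

Lemma veronese_shift (x : 'I_n.+1 -> int) k j e : j != k -> (0 < val e j)%N ->
  (veronese d n x (shift k j e) * x j = veronese d n x e * x k)%R.
Proof.
move=> jk ej; have kj : k != j by rewrite eq_sym.
rewrite /veronese (bigD1 k) //= (bigD1 j) //= [in RHS](bigD1 k) //= [in RHS](bigD1 j) //=.
rewrite (eq_bigr (fun i => x i ^+ (val e i : nat))%R); last first.
  by move=> i /andP[ik ij]; rewrite shift_val // (negbTE ik) (negbTE ij) addn0 subn0.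
rewrite !shift_val // !eqxx (negbTE kj) (negbTE jk) addn1 subn0 addn0 subn1 /=.
move: ej => /= ej; rewrite -[in RHS](prednK ej) exprS exprSr; ring.
Qed.

End Monomials.

Local Open Scope ring_scope.

Lemma primitive_nonzero m (x : 'I_m -> int) : primitive x -> exists i, x i != 0.
Proof.
move=> prim_x; case: (pickP (fun i => x i != 0)) => [i xi | all0]; first by exists i.
move: prim_x; rewrite /primitive big1 // => i _.
by have := all0 i; rewrite /= => /negbFE/eqP ->.
Qed.

Section TwoTermVectors.
Variable I : finType.
Implicit Types (c x : I -> int) (e f : I) (a b : int).

Definition two_term e f a b : I -> int :=
  fun m => (if m == e then a else 0) - (if m == f then b else 0).

Lemma sum_delta (F : I -> int) e a : \sum_m F m * (if m == e then a else 0) = F e * a.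
Proof. by rewrite (bigD1 e) //= eqxx big1 ?addr0 // => m /negbTE ->; rewrite mulr0. Qed.

Lemma dotz_two_term c e f a b : dotz c (two_term e f a b) = c e * a - c f * b.
Proof. by rewrite /dotz; under eq_bigr do rewrite mulrBr; rewrite sumrB !sum_delta. Qed.

Lemma sqnorm_two_term e f a b : e != f -> sqnorm (two_term e f a b) = a ^+ 2 + b ^+ 2.
Proof.
move=> ef; rewrite /sqnorm /two_term (bigD1 e) //= (bigD1 f) 1?eq_sym //=.
rewrite big1 => [|m /andP[me mf]]; last by rewrite (negbTE me) (negbTE mf) subrr expr0n.
by rewrite eqxx eq_sym (negbTE ef) eqxx subr0 sub0r sqrrN addr0.
Qed.

Lemma sqr_pair_le_sqnorm x e f : e != f -> x e ^+ 2 + x f ^+ 2 <= sqnorm x.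
Proof.
move=> ef; rewrite /sqnorm (bigD1 e) //= (bigD1 f) 1?eq_sym //=.
by rewrite lerD2l lerDl sumr_ge0 // => m _; exact: sqr_ge0.
Qed.

(* Triangular families are independent: if each y j has a non-zero pivot entry
   at g j, and y i can only be non-zero at the pivot of another y j when the
   rank r i is smaller than r j, then induction on r shows all coefficients of
   a vanishing combination are zero. *)
Lemma triangular_lin_indep (k : nat) (y : 'I_k -> I -> int) (g : 'I_k -> I)
    (r : 'I_k -> nat) :
  (forall j, y j (g j) != 0) ->
  (forall i j, i != j -> y i (g j) != 0 -> (r i < r j)%N) ->
  lin_indep y.
Proof.
move=> pivot lower c comb0.
suff vanish t j : (r j < t)%N -> c j = 0 by move=> j; exact: (vanish _ j (ltnSn _)).
elim: t j => [//|t IHt] j rjt.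
have := comb0 (g j); rewrite (bigD1 j) //= big1 ?addr0 => [|i ij].
  by move/eqP; rewrite mulf_eq0 intr_eq0 (negbTE (pivot j)) orbF => /eqP.
have [/eqP ->|yi] := boolP (y i (g j) == 0); first by rewrite mulr0.
by rewrite IHt ?mul0r //; have := lower i j ij yi; lia.
Qed.

End TwoTermVectors.

Theorem lemma5 (d n : nat) (x : 'I_n.+1 -> int) :
  (1 <= d)%N -> primitive x ->
  exists y : 'I_(Ndn d n).-1 -> mono n d -> int,
    (forall j, in_Lambda (veronese d n x) (y j)) /\
    (forall j, sqnorm (y j) <= sqnorm x) /\
    lin_indep y.
Proof.
move=> _ /primitive_nonzero [k xk].
pose g := @nonpure n d k; pose dn j := donor k (g j); pose e' j := shift k (dn j) (g j).
have donor_ok j : dn j != k /\ (0 < val (g j) (dn j))%N by exact/donorP/nonpureP.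
have e'_neq j : g j != e' j by case: (donor_ok j) => jk ej; rewrite eq_sym shift_neq.
exists (fun j => two_term (g j) (e' j) (x k) (x (dn j))); split; [|split].
- move=> j; case: (donor_ok j) => jk ej.
  by rewrite /in_Lambda dotz_two_term veronese_shift // subrr.
- move=> j; case: (donor_ok j) => jk _.
  by rewrite sqnorm_two_term ?e'_neq // sqr_pair_le_sqnorm // eq_sym.
- apply: (triangular_lin_indep (g := g) (r := fun j => nat_of_ord (val (g j) k))) => [j|i j ij].
    by rewrite /two_term eqxx (negbTE (e'_neq j)) subr0.
  have gij : (g j == g i) = false by rewrite (inj_eq (@nonpure_inj n d k)) eq_sym (negbTE ij).
  rewrite /two_term gij sub0r oppr_eq0; case: (eqVneq (g j) (e' i)) => [-> _|_]; last by rewrite eqxx.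
  by case: (donor_ok i) => jk ej; rewrite shift_k.
Qed.
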